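(* Suppose $N>3$ and let $c_\star$ be any real number with $\frac{n_1\vee n_2}{N-3}\le c_\star$. Then $$\sum_{\alpha\in\Gamma_1}\mathbb E\Big[I_\alpha\sum_{\beta\in\Gamma_1}|I_\beta-J_{\beta\alpha}|\sum_{\gamma\in\Gamma_1}|I_\gamma-J_{\gamma\alpha}|\Big]\le(8c_\star+36c_\star^2)(n_1\vee n_2).$$
   Context: Degree sequence $(d_1,\dots,d_n)$, $N=\sum d_i$ even, $n_k=|\{i:d_i=k\}|$, half-edges $1..N$ with $d_i$ belonging to vertex $v_i$; $\mathfrak g$ a uniform random perfect matching. $\Gamma_{11}$ = sets $\{\{s,t\}\}$, $s\in v_i,t\in v_j$, $i<j$, $d_i=d_j=1$; $\Gamma_{12}$ = sets $\{\{s,u\},\{t,v\}\}$, $s\in v_i,t\in v_j$, $i<j$, $d_i=d_j=1$, $u\ne v\in v_k$, $d_k=2$; $\Gamma_1=\Gamma_{11}\cup\Gamma_{12}$. $I_\alpha=1$ iff all pairs of $\alpha$ lie in $\mathfrak g$. Switching coupling: for $\alpha$ with pairs $\{s_{\ell,1},s_{\ell,2}\}$, $\ell=1..e$, ordered by increasing $s_{\ell,1}\wedge s_{\ell,2}$, independent $B_{\alpha,\ell}$ uniform on $\{1..N-2(e-\ell)-1\}$ (independent of each other over all $\alpha,\ell$ and of $\mathfrak g$); if $I_\alpha=0$ then $\mathfrak g_\alpha=\mathfrak g$; if $I_\alpha=1$, starting from $g_0=\mathfrak g$, for $\ell=1..e$ let $t_{\ell,1}$ be the $B_{\alpha,\ell}$-th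 smallest element of $\{1..N\}\setminus(\{s_{\ell,1}\wedge s_{\ell,2}\}\cup\bigcup_{m>\ell}\{s_{m,1},s_{m,2}\})$, $t_{\ell,2}$ its partner in $g_{\ell-1}$, and replace in $g_{\ell-1}$ the pairs $\{s_{\ell,1},s_{\ell,2}\},\{t_{\ell,1},t_{\ell,2}\}$ by $\{s_{\ell,1}\wedge s_{\ell,2},t_{\ell,1}\},\{s_{\ell,1}\vee s_{\ell,2},t_{\ell,2}\}$ (no change if $t_{\ell,1}=s_{\ell,1}\vee s_{\ell,2}$) to get $g_\ell$; $\mathfrak g_\alpha=g_e$. $J_{\beta\alpha}=1$ iff all pairs of $\beta$ lie in $\mathfrak g_\alpha$. *)

From mathcomp Require Import all_boot all_order all_algebra.
Set Implicit Arguments. Unset Strict Implicit. Unset Printing Implicit Defensive.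
Import Order.TTheory GRing.Theory Num.Theory.

(* Half-edges are 'I_N = {0,...,N-1} (the paper's 1..N shifted by one);
   vertices are 'I_n; [v x] is the vertex owning half-edge x, so the degree
   sequence is d_i = #|v^-1(i)| and N = sum_i d_i. *)
Section Switching.
Variables (N n : nat) (v : 'I_N -> 'I_n).

Definition deg (i : 'I_n) : nat := #|[set x : 'I_N | v x == i]|.
Definition nk (k : nat) : nat := #|[set i : 'I_n | deg i == k]|.

(* an (unordered) pair {x,y} is stored as (min, max) *)
Definition hpair := ('I_N * 'I_N)%type.
Definition mkpair (x y : 'I_N) : hpair := if x < y then (x, y) else (y, x).

Definition Gamma11 : {set {set hpair}} :=
  [set [set mkpair st.1 st.2] | st : hpair &
     [&& deg (v st.1) == 1, deg (v st.2) == 1 & v st.1 < v st.2]].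

(* q = ((s, t), (u, w)) : pairs {s,u}, {t,w} *)
Definition Gamma12 : {set {set hpair}} :=
  [set [set mkpair q.1.1 q.2.1; mkpair q.1.2 q.2.2] | q : hpair * hpair &
     [&& deg (v q.1.1) == 1, deg (v q.1.2) == 1, v q.1.1 < v q.1.2,
         q.2.1 != q.2.2, v q.2.1 == v q.2.2 & deg (v q.2.1) == 2]].

Definition Gamma1 : {set {set hpair}} := Gamma11 :|: Gamma12.

(* perfect matchings = fixed-point-free involutions of the half-edges *)
Definition is_matching (g : {ffun 'I_N -> 'I_N}) : bool :=
  [forall x, (g (g x) == x) && (g x != x)].
Definition Mset : {set {ffun 'I_N -> 'I_N}} := [set g | is_matching g].

Definition inG (g : {ffun 'I_N -> 'I_N}) (p : hpair) : bool := g p.1 == p.2.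
Definition Ind (al : {set hpair}) (g : {ffun 'I_N -> 'I_N}) : bool :=
  [forall p in al, inG g p].

Definition sorted_pairs (al : {set hpair}) : seq hpair :=
  sort (fun p q : hpair => p.1 <= q.1) (enum al).

Definition avail (a : 'I_N) (rest : seq hpair) : seq 'I_N :=
  [seq x <- sort (fun x y : 'I_N => x <= y) (enum 'I_N) |
     (x != a) && all (fun q : hpair => (x != q.1) && (x != q.2)) rest].

(* replace {a,b},{t1,t2} by {a,t1},{b,t2} where t2 = g t1 (no change if t1=b) *)
Definition switch1 (g : {ffun 'I_N -> 'I_N}) (p : hpair) (t1 : 'I_N)
  : {ffun 'I_N -> 'I_N} :=
  if t1 == p.2 then g else
  let t2 := g t1 in
  [ffun x => if x == p.1 then t1 else if x == t1 then p.1
             else if x == p.2 then t2 else if x == t2 then p.2 else g x].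

(* bl is the 0-indexed B: t1 is the (bl+1)-th smallest element of avail *)
Fixpoint switch_all (ps : seq hpair) (bs : seq nat) (g : {ffun 'I_N -> 'I_N})
  : {ffun 'I_N -> 'I_N} :=
  match ps, bs with
  | p :: ps', bl :: bs' => switch_all ps' bs' (switch1 g p (nth p.1 (avail p.1 ps') bl))
  | _, _ => g
  end.

(* the joint values of (B_{al,1},...,B_{al,e}) (0-indexed, B_l - 1 < N-2(e-l)-1);
   uniform on this set = independent uniform B_{al,l} *)
Definition Bset (al : {set hpair}) : {set {ffun 'I_#|al| -> 'I_N}} :=
  [set b : {ffun 'I_#|al| -> 'I_N} | [forall l : 'I_#|al|, b l < N - 2 * (#|al| - l.+1) - 1]].

Definition bseq (al : {set hpair}) (b : {ffun 'I_#|al| -> 'I_N}) : seq nat :=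
  [seq val (b l) | l <- enum 'I_#|al|].

Definition g_alpha (al : {set hpair}) (g : {ffun 'I_N -> 'I_N})
  (b : {ffun 'I_#|al| -> 'I_N}) : {ffun 'I_N -> 'I_N} :=
  if Ind al g then switch_all (sorted_pairs al) (bseq b) g else g.

Definition Jba (be al : {set hpair}) (g : {ffun 'I_N -> 'I_N})
  (b : {ffun 'I_#|al| -> 'I_N}) : bool := Ind be (@g_alpha al g b).

Variable R : realFieldType.
Local Open Scope ring_scope.

(* E[ I_al * sum_be |I_be - J_{be,al}| * sum_ga |I_ga - J_{ga,al}| ],
   g uniform in Mset, B_al uniform in Bset al, independent *)
Definition Eterm (al : {set hpair}) : R :=
  (#|Mset|%:R)^-1 * (#|Bset al|%:R)^-1 *
  \sum_(g in Mset) \sum_(b in Bset al)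
     ((Ind al g)%:R *
      (\sum_(be in Gamma1) `|(Ind be g)%:R - (@Jba be al g b)%:R|) *
      (\sum_(ga in Gamma1) `|(Ind ga g)%:R - (@Jba ga al g b)%:R|)).

End Switching.

From Pilot Require Import Defs.
From mathcomp Require Import all_boot all_order all_algebra perm.
From mathcomp Require Import lra.
Set Implicit Arguments. Unset Strict Implicit. Unset Printing Implicit Defensive.
Import Order.TTheory GRing.Theory Num.Theory.

(* Fix alpha with I_alpha(g) = 1.  The coupled matching g_alpha arises from g by one switch
   (alpha in Gamma11) or two switches (alpha in Gamma12), and a switch removes at most two
   pairs of the matching and creates at most two.  A beta in Gamma1 with I_beta = 1 is
   determined by any one of its pairs, so the beta that are switched off inject into the
   removed pairs and those switched on inject into the created pairs.  Hence at most 2 + 2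
   of the beta have I_beta <> J_beta,alpha when alpha is in Gamma11, and at most 3 + 3 when
   alpha is in Gamma12: there both removed pairs of alpha belong to alpha, and both pairs
   created at the half-edges of the degree-2 vertex belong to one beta.  So each summand is
   at most 16 P(I_alpha = 1) = 16 / (N - 1), resp. 36 / ((N - 1) (N - 3)); summing with
   2 |Gamma11| <= n1^2 and |Gamma12| <= n1^2 n2 gives the bound. *)

Section Matchings.
Variable N : nat.
Implicit Types (g h : {ffun 'I_N -> 'I_N}) (p q : hpair N) (x y z : 'I_N).

Lemma mkpairC x y : mkpair x y = mkpair y x.
Proof.
rewrite /mkpair; case: (ltngtP x y) => // Exy.
by have -> : x = y by apply: val_inj.
Qed.

Lemma mkpair_lt x y : x != y -> (mkpair x y).1 < (mkpair x y).2.
Proof.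
move=> Nxy; rewrite /mkpair; case: (ltngtP x y) => //= Exy.
by case/eqP: Nxy; apply: val_inj.
Qed.

Lemma mkpair_inj x y x' y' : mkpair x y = mkpair x' y' ->
  (x = x' /\ y = y') \/ (x = y' /\ y = x').
Proof. by rewrite /mkpair; do 2 case: ifP => _; case=> -> ->; tauto. Qed.

Lemma perm_mkpair x y : perm_eq [:: (mkpair x y).1; (mkpair x y).2] [:: x; y].
Proof. by rewrite /mkpair; case: ifP => _ //; exact: permEl (perm_catC [:: y] [:: x]). Qed.

Lemma mkpairK p : p.1 < p.2 -> mkpair p.1 p.2 = p.
Proof. by case: p => a b /= ltab; rewrite /mkpair ltab. Qed.

Definition matching g := forall x, g (g x) = x /\ g x != x.

Lemma is_matchingP g : reflect (matching g) (is_matching g).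
Proof.
apply: (iffP forallP) => Mg x.
  by have /andP [/eqP -> ->] := Mg x.
by have [-> ->] := Mg x; rewrite eqxx.
Qed.

Lemma inG_mkpair g x y : matching g -> inG g (mkpair x y) = (g x == y).
Proof.
move=> Mg; rewrite /inG /mkpair; case: ifP => //= _.
by apply/eqP/eqP => <-; apply: (Mg _).1.
Qed.

Lemma IndP al g p : Ind al g -> p \in al -> inG g p.
Proof. by move/forall_inP; apply. Qed.

Lemma Ind_set1 g p : Ind [set p] g = inG g p.
Proof.
apply/forall_inP/idP => [-> //|gp q]; first by rewrite inE.
by rewrite inE => /eqP ->.
Qed.

Lemma Ind_set2 g p q : Ind [set p; q] g = inG g p && inG g q.
Proof.
apply/forall_inP/andP => [Ig | [gp gq] r]; first by split; apply: Ig; rewrite !inE eqxx ?orbT.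
by rewrite !inE => /orP [] /eqP ->.
Qed.

Lemma matching_uniq h a c : matching h -> c != a -> c != h a ->
  uniq [:: a; h a; c; h c].
Proof.
move=> Mh Nca Ncb; rewrite /= !inE !negb_or [a == h a]eq_sym [c == h c]eq_sym.
rewrite (Mh a).2 (Mh c).2 [a == c]eq_sym Nca [h a == c]eq_sym Ncb !andbT /=.
apply/andP; split.
  by apply: contraNneq Ncb => ->; rewrite (Mh c).1.
by apply: contraNneq Nca => /(congr1 h); rewrite (Mh a).1 (Mh c).1 => ->.
Qed.

Lemma matching_notin g a b c d x : matching g -> g a = b -> g c = d ->
  x \notin [:: a; b; c; d] -> g x \notin [:: a; b; c; d].
Proof.
move=> Mg <- <-; apply: contra; rewrite -[X in _ -> X \in _](Mg x).1 !inE.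
by case/or4P => /eqP ->; rewrite ?(Mg _).1 eqxx ?orbT.
Qed.

Lemma switch1_id h a b : switch1 h (a, b) b = h.
Proof. by rewrite /switch1 /= eqxx. Qed.

Lemma switch1_spec h a b c : matching h -> h a = b -> c != a -> c != b ->
  let h' := switch1 h (a, b) c in
  [/\ h' a = c, h' c = a, h' b = h c, h' (h c) = b &
      forall x, x \notin [:: a; b; c; h c] -> h' x = h x].
Proof.
move=> Mh <- Nca Ncb /=; have := matching_uniq Mh Nca Ncb.
rewrite /= !inE !negb_or => /and4P [/and3P [Nab Nac Nad] /andP [Nbc Nbd] Ncd _].
rewrite /switch1 /= (negbTE Ncb) !ffunE eqxx; split => //.
- by rewrite (negbTE Nca) eqxx.
- by rewrite [h a == a]eq_sym (negbTE Nab) (negbTE Nbc) eqxx.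
- rewrite [h c == a]eq_sym (negbTE Nad) [h c == c]eq_sym (negbTE Ncd).
  by rewrite [h c == h a]eq_sym (negbTE Nbd) eqxx.
- move=> x; rewrite !inE => /norP [Nxa /norP [Nxb /norP [Nxc Nxd]]].
  by rewrite ffunE (negbTE Nxa) (negbTE Nxc) (negbTE Nxb) (negbTE Nxd).
Qed.

Lemma switch1_matching h a b c : matching h -> h a = b -> c != a ->
  matching (switch1 h (a, b) c).
Proof.
move=> Mh Eb Nca; have [->|Ncb] := eqVneq c b; first by rewrite switch1_id.
have [E1 E2 E3 E4 E5] := switch1_spec Mh Eb Nca Ncb.
have := matching_uniq Mh Nca; rewrite Eb => /(_ Ncb).
rewrite /= !inE !negb_or => /and4P [/and3P [Nab Nac Nad] /andP [Nbc Nbd] Ncd _].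
move=> x; have [xS|xS] := boolP (x \in [:: a; b; c; h c]).
  move: xS; rewrite !inE => /or4P [] /eqP ->; rewrite ?E1 ?E2 ?E3 ?E4;
  by split; rewrite // eq_sym.
by rewrite (E5 _ xS) (E5 _ (matching_notin Mh Eb erefl xS)); exact: Mh.
Qed.

Definition removed g g' : {set hpair N} :=
  [set q : hpair N | [&& q.1 < q.2, inG g q & ~~ inG g' q]].

Lemma card_removed_le2 g g' x y : matching g ->
  (forall z, g' z != g z -> z \in [:: x; g x; y; g y]) -> #|removed g g'| <= 2.
Proof.
move=> Mg moved.
have sub : removed g g' \subset [set mkpair x (g x); mkpair y (g y)].
  apply/subsetP => -[z1 z2]; rewrite inE /inG /= => /and3P [lt12 /eqP E2 Nz].
  have := moved z1; rewrite E2 => /(_ Nz).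
  rewrite -(mkpairK (p := (z1, z2)) lt12) /= -E2 !inE => /or4P [] /eqP ->; rewrite ?eqxx ?orbT //.
    by rewrite (Mg x).1 mkpairC eqxx.
  by rewrite (Mg y).1 mkpairC eqxx orbT.
by apply: leq_trans (subset_leq_card sub) _; rewrite cards2; case: (_ != _).
Qed.

Lemma card_removed_trans g g1 g2 :
  #|removed g g2| <= #|removed g g1| + #|removed g1 g2|.
Proof.
apply: leq_trans (leq_card_setU _ _); apply: subset_leq_card.
by apply/subsetP => q; rewrite !inE => /and3P [-> -> ->]; case: (inG g1 q).
Qed.

Lemma switch1_removed h a b c : matching h -> h a = b -> c != a ->
  #|removed h (switch1 h (a, b) c)| <= 2 /\ #|removed (switch1 h (a, b) c) h| <= 2.
Proof.
move=> Mh Eb Nca; have [->|Ncb] := eqVneq c b.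
  rewrite switch1_id.
  have -> : removed h h = set0 by apply/setP => q; rewrite !inE andbN andbF.
  by rewrite cards0.
have [E1 E2 E3 E4 E5] := switch1_spec Mh Eb Nca Ncb.
have moved x : switch1 h (a, b) c x != h x -> x \in [:: a; b; c; h c].
  by apply: contraR => /E5 ->; rewrite eqxx.
split; first by apply: (card_removed_le2 (x := a) (y := c) Mh) => x; rewrite Eb => /moved.
apply: (card_removed_le2 (x := a) (y := b) (switch1_matching Mh Eb Nca)) => x.
by rewrite E1 E3 eq_sym => /moved; rewrite !inE; case/or4P => ->; rewrite ?orbT.
Qed.

Lemma switch2_moves g a1 b1 a2 b2 c1 c2 : matching g -> g a1 = b1 -> g a2 = b2 ->
  uniq [:: a1; b1; a2; b2] -> c1 \notin [:: a1; b1; a2; b2] -> c2 != a2 -> c2 != b2 ->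
  let g1 := switch1 g (a1, b1) c1 in
  g1 a2 = b2 /\ forall x, x \in [:: a1; b1; a2; b2] -> switch1 g1 (a2, b2) c2 x != g x.
Proof.
move=> Mg E1 E2 U Nc1 Nc2a Nc2b /=.
have Ngc1 := matching_notin Mg E1 E2 Nc1.
move: U Nc1; rewrite /= !inE !negb_or.
move=> /and4P [/and3P [_ Na12 Nab12] /andP [Nba2 Nbb2] _ _] /and4P [Nc1a1 Nc1b1 Nc1a2 _].
have [F1 _ F3 _ F5] := switch1_spec Mg E1 Nc1a1 Nc1b1.
have Mg1 := switch1_matching Mg E1 Nc1a1.
set g1 := switch1 g (a1, b1) c1 in F1 F3 F5 Mg1 *.
have G2 : g1 a2 = b2.
  rewrite F5 //; move: Ngc1; rewrite !inE !negb_or => /and4P [_ _ Nd _].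
  by rewrite ![a2 == _]eq_sym Na12 Nba2 Nc1a2 Nd.
split=> //; have [H1 H2 H3 H4 H5] := switch1_spec Mg1 G2 Nc2a Nc2b.
have gb1 : g b1 = a1 by rewrite -E1 (Mg a1).1.
have gb2 : g b2 = a2 by rewrite -E2 (Mg a2).1.
move=> x; rewrite !inE => /or4P [] /eqP ->.
- have [E|N1] := eqVneq a1 c2; first by rewrite {1}E H2 E1 eq_sym.
  have [E|N2] := eqVneq a1 (g1 c2); first by rewrite {1}E H4 E1 eq_sym.
  by rewrite H5 ?F1 ?E1 // !inE !negb_or Na12 Nab12 N1.
- have [E|N1] := eqVneq b1 c2; first by rewrite {1}E H2 gb1 eq_sym.
  have [E|N2] := eqVneq b1 (g1 c2); first by rewrite {1}E H4 gb1 eq_sym.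
  rewrite H5 ?F3 ?gb1; last by rewrite !inE !negb_or Nba2 Nbb2 N1.
  by apply: contraNneq Nc1b1 => E; rewrite -[c1](Mg c1).1 E E1.
- by rewrite H1 E2.
- rewrite H3 gb2; apply: contraNneq Nc2b => E.
  by rewrite -[c2](Mg1 c2).1 E G2.
Qed.

End Matchings.

Section MatchingFibers.
Variable N : nat.
Implicit Types (g : {ffun 'I_N -> 'I_N}) (A : {set {ffun 'I_N -> 'I_N}}) (x y z : 'I_N).

Definition tconj y y' g : {ffun 'I_N -> 'I_N} :=
  [ffun x => tperm y y' (g (tperm y y' x))].

Lemma tconjK y y' : involutive (tconj y y').
Proof. by move=> g; apply/ffunP => x; rewrite !ffunE !tpermK. Qed.

Lemma tconjC y y' : tconj y y' = tconj y' y.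
Proof. by rewrite /tconj tpermC. Qed.

Lemma tconj_matching y y' g : matching g -> matching (tconj y y' g).
Proof.
move=> Mg x; rewrite !ffunE tpermK (Mg _).1 tpermK; split=> //.
apply: contraNneq (Mg (tperm y y' x)).2 => /(congr1 (tperm y y')).
by rewrite tpermK => ->; rewrite eqxx.
Qed.

Lemma card_fiber_le A z y y' : {homo tconj y y' : g / g \in A} ->
  z != y -> z != y' -> #|[set g in A | g z == y]| <= #|[set g in A | g z == y']|.
Proof.
move=> homA Nzy Nzy'; have tz : tperm y y' z = z by rewrite tpermD // eq_sym.
rewrite -(card_imset _ (can_inj (tconjK y y'))).
apply: subset_leq_card; apply/subsetP => _ /imsetP [g + ->].
rewrite !inE => /andP [Ag gz]; move/eqP: gz => gz.
by rewrite (homA _ Ag) /tconj ffunE tz gz tpermL eqxx.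
Qed.

Lemma card_fibers A z (V : {set 'I_N}) y0 : y0 \in V -> z \notin V ->
  (forall g, g \in A -> g z \in V) -> (forall y, y \in V -> {homo tconj y y0 : g / g \in A}) ->
  #|A| = #|V| * #|[set g in A | g z == y0]|.
Proof.
move=> Vy0 Vz AV homA.
have fiberE y : y \in V -> #|[set g in A | g z == y]| = #|[set g in A | g z == y0]|.
  move=> Vy; have Nzy : z != y by apply: contraNneq Vz => ->.
  have Nzy0 : z != y0 by apply: contraNneq Vz => ->.
  apply/eqP; rewrite eqn_leq !card_fiber_le //; last exact: homA Vy.
  by rewrite tconjC; exact: homA Vy.
rewrite -sum1_card (partition_big (fun g => g z) (mem V)) //= -sum_nat_const.
apply: eq_bigr => y Vy; rewrite -(fiberE y Vy) -sum1_card.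
by apply: eq_bigl => g; rewrite !inE.
Qed.

Lemma card_Mset_fiber1 s t : s != t ->
  #|Mset N| = (N - 1) * #|[set g in Mset N | g s == t]|.
Proof.
move=> Nst; rewrite (@card_fibers _ s [set~ s] t).
- by rewrite cardsC1 card_ord subn1.
- by rewrite !inE eq_sym.
- by rewrite !inE eqxx.
- by move=> g; rewrite !inE => /is_matchingP Mg; rewrite (Mg s).2.
- by move=> y _ g; rewrite !inE => /is_matchingP Mg; apply/is_matchingP/tconj_matching.
Qed.

Lemma card_Mset_fiber2 s u t w : uniq [:: s; u; t; w] ->
  #|Mset N| = (N - 1) * (N - 3) * #|[set g in Mset N | (g s == u) && (g t == w)]|.
Proof.
rewrite /= !inE !negb_or => /and4P [/and3P [Nsu Nst Nsw] /andP [Nut Nuw] Ntw _].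
rewrite (card_Mset_fiber1 Nsu) -mulnA; congr (_ * _).
have inC x : (x \in ~: [set s; u; t]) = [&& x != s, x != u & x != t].
  by rewrite !inE !negb_or -andbA.
set A := [set g in Mset N | g s == u].
rewrite (@card_fibers A t (~: [set s; u; t]) w).
- congr (_ * _); last by apply: eq_card => g; rewrite !inE andbA.
  rewrite cardsCs setCK card_ord setUC cardsU1 cards2 Nsu.
  by rewrite !inE negb_or [t == s]eq_sym Nst [t == u]eq_sym Nut.
- by rewrite inC ![w == _]eq_sym Nsw Nuw Ntw.
- by rewrite inC eqxx !andbF.
- move=> g; rewrite inC !inE => /andP [/is_matchingP Mg /eqP gs]; rewrite (Mg t).2 andbT.
  apply/andP; split.
    by apply: contraNneq Nut => gt; rewrite -gs -gt (Mg t).1.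
  by apply: contraNneq Nst => gt; rewrite -[t](Mg t).1 gt -gs (Mg s).1.
- move=> y; rewrite inC => /and3P [Nys Nyu Nyt] g; rewrite /A !inE => /andP [/is_matchingP Mg gs].
  apply/andP; split; first exact/is_matchingP/tconj_matching.
  have [Nws Nwu] : w != s /\ w != u by rewrite ![w == _]eq_sym.
  by rewrite ffunE (tpermD Nys Nws) (eqP gs) (tpermD Nyu Nwu).
Qed.

End MatchingFibers.

Section Coupling.
Variable N : nat.
Implicit Types (g : {ffun 'I_N -> 'I_N}) (p q : hpair N) (a : 'I_N) (rest : seq (hpair N)).
Implicit Types (al : {set hpair N}).

Lemma mem_avail a rest x : (x \in avail a rest) =
  (x != a) && all (fun q : hpair N => (x != q.1) && (x != q.2)) rest.
Proof. by rewrite /avail mem_filter mem_sort mem_enum andbT. Qed.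

Lemma size_avail a rest : N <= size (avail a rest) + (2 * size rest).+1.
Proof.
have size_ends : size (flatten [seq [:: q.1; q.2] | q <- rest]) = 2 * size rest.
  by elim: rest => //= q r ->; rewrite mulnS.
set P := fun x : 'I_N => (x != a) && all (fun q : hpair N => (x != q.1) && (x != q.2)) rest.
set s := sort (fun x y : 'I_N => x <= y) (enum 'I_N).
have sizes : size s = N by rewrite size_sort size_enum_ord.
rewrite /avail size_filter -{1}sizes -(count_predC P s) leq_add2l -size_ends -size_filter.
apply: (@uniq_leq_size _ _ (a :: flatten [seq [:: q.1; q.2] | q <- rest])).
  by rewrite filter_uniq // sort_uniq enum_uniq.
move=> x; rewrite mem_filter /= /P negb_and negbK => /andP [/orP [/eqP -> | nall] _].
  exact: mem_head.
move: nall; rewrite -has_predC => /hasP [q qr]; rewrite /= negb_and !negbK => xq.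
rewrite inE; apply/orP; right; apply/flattenP; exists [:: q.1; q.2].
  by apply/mapP; exists q.
by rewrite !inE.
Qed.

Lemma nth_avail a rest k : k < N - 2 * size rest - 1 -> nth a (avail a rest) k \in avail a rest.
Proof.
move=> lt_k; apply: mem_nth; apply: leq_trans lt_k _.
by rewrite -subnDA leq_subLR addnC addn1 size_avail.
Qed.

Lemma bseq_spec al b : b \in Bset al -> size (Defs.bseq b) = #|al| /\
  forall l, l < #|al| -> nth 0 (Defs.bseq b) l < N - 2 * (#|al| - l.+1) - 1.
Proof.
rewrite inE => /forallP Bb; split; first by rewrite size_map size_enum_ord.
move=> l lt_l; rewrite (nth_map (Ordinal lt_l)) ?size_enum_ord //.
have -> : nth (Ordinal lt_l) (enum 'I_#|al|) l = Ordinal lt_l.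
  by apply: val_inj; rewrite /= nth_enum_ord.
exact: Bb.
Qed.

Lemma g_alpha_set1 al p g b : al = [set p] -> Ind al g -> b \in Bset al ->
  exists2 c, c != p.1 & g_alpha g b = switch1 g p c.
Proof.
move=> alE; subst al => Ip Bb; have [size_b nth_b] := bseq_spec Bb; rewrite cards1 in size_b nth_b.
have := nth_b 0 isT; rewrite /g_alpha Ip /sorted_pairs enum_set1 /=.
case: (Defs.bseq b) size_b => [|k []] //= _ lt_k.
exists (nth p.1 (avail p.1 [::]) k) => //.
by have := @nth_avail p.1 [::] k lt_k; rewrite mem_avail => /andP [].
Qed.

Lemma g_alpha_set2 al p q g b : al = [set p; q] -> p.1 < q.1 -> Ind al g -> b \in Bset al ->
  exists c1 c2, [/\ c1 \notin [:: p.1; q.1; q.2], c2 != q.1 &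
    g_alpha g b = switch1 (switch1 g p c1) q c2].
Proof.
move=> alE; subst al => lt_pq Ipq Bb.
have Npq : p != q by apply: contraTneq lt_pq => ->; rewrite ltnn.
have [size_b nth_b] := bseq_spec Bb.
have card2 : #|[set p; q]| = 2 by rewrite cards2 Npq.
rewrite card2 in size_b nth_b.
have sortedE : sorted_pairs [set p; q] = [:: p; q].
  have Eperm : perm_eq (sorted_pairs [set p; q]) [:: p; q].
    rewrite perm_sort; apply: uniq_perm; rewrite ?enum_uniq //= ?inE ?Npq // => x.
    by rewrite mem_enum !inE.
  have : sorted (fun x y : hpair N => x.1 <= y.1) (sorted_pairs [set p; q]).
    by apply: sort_sorted => x y; exact: leq_total.
  have := perm_uniq Eperm; have := perm_mem Eperm; have := perm_size Eperm.
  case: (sorted_pairs _) => [|x [|y []]] //= _ Emem; rewrite !inE Npq !andbT.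
  have : x \in [:: p; q] by rewrite -Emem mem_head.
  have : y \in [:: p; q] by rewrite -Emem !inE eqxx orbT.
  by rewrite !inE => /orP [] /eqP -> /orP [] /eqP -> //; rewrite ?eqxx // leqNgt lt_pq.
have := nth_b 1 isT; have := nth_b 0 isT; rewrite /g_alpha Ipq sortedE.
case: (Defs.bseq b) size_b => [|k0 [|k1 []]] //= _ lt_k0 lt_k1.
exists (nth p.1 (avail p.1 [:: q]) k0), (nth q.1 (avail q.1 [::]) k1); split => //.
  by have := @nth_avail p.1 [:: q] k0 lt_k0; rewrite mem_avail /= andbT !inE !negb_or.
by have := @nth_avail q.1 [::] k1 lt_k1; rewrite mem_avail => /andP [].
Qed.

End Coupling.

Section Gamma1.
Variables (N n : nat) (v : 'I_N -> 'I_n).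
Implicit Types (g h : {ffun 'I_N -> 'I_N}) (p q : hpair N) (x y z u w : 'I_N).
Implicit Types (al be : {set hpair N}).

Definition deg1 x := deg v (v x) == 1.
Definition deg2 x := deg v (v x) == 2.

Lemma deg1_fiber x y : deg1 x -> v y = v x -> y = x.
Proof.
rewrite /deg1 /deg => /cards1P [z Ez] vy.
have : x \in [set z0 | v z0 == v x] by rewrite inE.
have : y \in [set z0 | v z0 == v x] by rewrite inE vy.
by rewrite Ez !inE => /eqP -> /eqP ->.
Qed.

Lemma deg2_fiber u w z : deg2 u -> v w = v u -> w != u -> v z = v u -> z = u \/ z = w.
Proof.
rewrite /deg2 /deg => /eqP card2 vw Nwu vz.
have fiberE : [set u; w] = [set z0 | v z0 == v u].
  apply/eqP; rewrite eqEcard card2 cards2 eq_sym Nwu andbT.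
  by apply/subsetP => y; rewrite !inE => /orP [] /eqP ->; rewrite ?vw eqxx.
have : z \in [set z0 | v z0 == v u] by rewrite inE vz.
by rewrite -fiberE !inE => /orP [] /eqP ->; tauto.
Qed.

Lemma deg1_neq_deg2 x y : deg1 x -> deg2 y -> x != y.
Proof. by rewrite /deg1 /deg2 => /eqP d1; apply: contraTneq => <-; rewrite d1. Qed.

Lemma Gamma11P be : reflect
  (exists s t, [/\ deg1 s, deg1 t, v s < v t & be = [set mkpair s t]])
  (be \in Gamma11 v).
Proof.
apply: (iffP imsetP) => [[st] | [s [t [d1s d1t lt_st ->]]]].
  by rewrite inE => /and3P [d1s d1t lt_st] ->; exists st.1, st.2.
by exists (s, t) => //; rewrite inE /= lt_st andbT; apply/andP.
Qed.

Lemma Gamma12P be : reflect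
  (exists s t u w, [/\ deg1 s && deg1 t, v s < v t, [&& w != u, v w == v u & deg2 u] &
     be = [set mkpair s u; mkpair t w]])
  (be \in Gamma12 v).
Proof.
apply: (iffP imsetP) => [[q] | [s [t [u [w [/andP [d1s d1t] lt_st /and3P [Nwu vw d2u] ->]]]]]].
  rewrite inE => /and5P [d1s d1t lt_st Nuw /andP [vu d2u]] ->.
  exists q.1.1, q.1.2, q.2.1, q.2.2; split => //; first exact/andP.
  by rewrite eq_sym Nuw /= eq_sym vu.
exists ((s, t), (u, w)) => //; rewrite inE /=; apply/and5P; split => //.
  by rewrite eq_sym.
by rewrite eq_sym vw.
Qed.

Lemma Gamma12E al : al \in Gamma12 v -> exists s t u w,
  [/\ uniq [:: s; u; t; w], deg2 u, v w = v u & al = [set mkpair s u; mkpair t w]].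
Proof.
case/Gamma12P => s [t [u [w [/andP [d1s d1t] lt_st /and3P [Nwu /eqP vw d2u] ->]]]].
exists s, t, u, w; split => //; have d2w : deg2 w by rewrite /deg2 vw.
have [Nsu Nsw] := (deg1_neq_deg2 d1s d2u, deg1_neq_deg2 d1s d2w).
have [Ntu Ntw] := (deg1_neq_deg2 d1t d2u, deg1_neq_deg2 d1t d2w).
rewrite /= !inE !negb_or Nsu Nsw [u == t]eq_sym Ntu [u == w]eq_sym Nwu Ntw !andbT.
by apply: contraTneq lt_st => ->; rewrite ltnn.
Qed.

Lemma Gamma1_pair be p : be \in Gamma1 v -> p \in be ->
  exists x y, [/\ p = mkpair x y, x != y, deg1 x & deg1 y || deg2 y].
Proof.
rewrite inE => /orP [/Gamma11P [s [t [d1s d1t lt_st ->]]] |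
  /Gamma12P [s [t [u [w [/andP [d1s d1t] _ /and3P [_ /eqP vw d2u] ->]]]]]].
  rewrite inE => /eqP ->; exists s, t; split; rewrite ?d1t //.
  by apply: contraTneq lt_st => ->; rewrite ltnn.
have d2w : deg2 w by rewrite /deg2 vw.
rewrite !inE => /orP [] /eqP ->; [exists s, u | exists t, w];
  by split; rewrite ?d2u ?d2w ?orbT // deg1_neq_deg2.
Qed.

Lemma Gamma1_lt be p : be \in Gamma1 v -> p \in be -> p.1 < p.2.
Proof. by move=> Gbe /(Gamma1_pair Gbe) [x [y [-> Nxy _ _]]]; exact: mkpair_lt. Qed.

Definition partner x := odflt x [pick y | (v y == v x) && (y != x)].

Lemma partnerE u w : deg2 u -> v w = v u -> w != u -> partner u = w.
Proof.
move=> d2u vw Nwu; rewrite /partner; case: pickP => [y /andP [/eqP vy Nyu] | /(_ w)].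
  by have [Eyu|//] := deg2_fiber d2u vw Nwu vy; rewrite Eyu eqxx in Nyu.
by rewrite vw eqxx Nwu.
Qed.

Definition block h p : {set hpair N} :=
  if deg1 p.1 && deg1 p.2 then [set p] else
  let u := if deg2 p.1 then p.1 else p.2 in
  [set mkpair (h u) u; mkpair (h (partner u)) (partner u)].

Lemma block_deg12 h x u w : matching h -> deg1 x -> deg2 u -> v w = v u -> w != u ->
  h x = u -> block h (mkpair x u) = [set mkpair x u; mkpair (h w) w].
Proof.
move=> Mh d1x d2u vw Nwu hx; rewrite /block.
have Nd1u : ~~ deg1 u by move: d2u; rewrite /deg1 /deg2 => /eqP ->.
have Nd2x : ~~ deg2 x by move: d1x; rewrite /deg1 /deg2 => /eqP ->.
have -> : deg1 (mkpair x u).1 && deg1 (mkpair x u).2 = false.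
  by rewrite /mkpair; case: (x < u) => /=; rewrite (negbTE Nd1u) ?andbF.
have -> : (if deg2 (mkpair x u).1 then (mkpair x u).1 else (mkpair x u).2) = u.
  by rewrite /mkpair; case: (x < u) => /=; rewrite ?d2u ?(negbTE Nd2x).
by rewrite /= (partnerE d2u vw Nwu) -hx (Mh x).1.
Qed.

Lemma Gamma1_block h be p : matching h -> be \in Gamma1 v -> Ind be h -> p \in be ->
  be = block h p.
Proof.
move=> Mh; rewrite inE => /orP [/Gamma11P [s [t [d1s d1t _ ->]]] |
  /Gamma12P [s [t [u [w [/andP [d1s d1t] _ /and3P [Nwu /eqP vw d2u] ->]]]]]] Ibe.
  rewrite inE => /eqP ->; rewrite /block.
  have /allP d1st : all deg1 [:: (mkpair s t).1; (mkpair s t).2].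
    by rewrite (perm_all _ (perm_mkpair s t)) /= d1s d1t.
  by rewrite !d1st ?mem_head // !inE eqxx orbT.
have hs : h s = u by apply/eqP; rewrite -inG_mkpair // (IndP Ibe) // !inE eqxx.
have ht : h t = w by apply/eqP; rewrite -inG_mkpair // (IndP Ibe) // !inE eqxx orbT.
have d2w : deg2 w by rewrite /deg2 vw.
have Nuw : u != w by rewrite eq_sym.
rewrite !inE => /orP [] /eqP ->.
  by rewrite (block_deg12 Mh d1s d2u vw Nwu hs) -ht (Mh t).1.
by rewrite (block_deg12 Mh d1t d2w (esym vw) Nuw ht) -hs (Mh s).1 setUC.
Qed.

Lemma Gamma1_Ind_inj h be be' p : matching h -> be \in Gamma1 v -> be' \in Gamma1 v ->
  Ind be h -> Ind be' h -> p \in be -> p \in be' -> be = be'.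
Proof.
move=> Mh Gbe Gbe' Ibe Ibe' pbe pbe'.
by rewrite (Gamma1_block Mh Gbe Ibe pbe) (Gamma1_block Mh Gbe' Ibe' pbe').
Qed.

Lemma Gamma1_partner h be u w : matching h -> be \in Gamma1 v -> Ind be h ->
  deg2 u -> v w = v u -> w != u -> mkpair u (h u) \in be ->
  mkpair w (h w) \in be /\ mkpair w (h w) != mkpair u (h u).
Proof.
move=> Mh Gbe Ibe d2u vw Nwu ube.
have [x [y [Exy _ d1x _]]] := Gamma1_pair Gbe ube.
have d1hu : deg1 (h u).
  case/mkpair_inj: Exy => [[Eux _] | [_ ->]] //.
  by move: (deg1_neq_deg2 d1x d2u); rewrite Eux eqxx.
split.
  rewrite (Gamma1_block Mh Gbe Ibe ube) [mkpair u _]mkpairC.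
  rewrite (block_deg12 Mh d1hu d2u vw Nwu (Mh u).1).
  by rewrite !inE mkpairC eqxx orbT.
apply/negP => /eqP /mkpair_inj [[Ewu _] | [Ewhu _]]; first by rewrite Ewu eqxx in Nwu.
have d2w : deg2 w by rewrite /deg2 vw.
by move: (deg1_neq_deg2 d1hu d2w); rewrite Ewhu eqxx.
Qed.

Definition switched_off g g' := [set be in Gamma1 v | Ind be g && ~~ Ind be g'].

Lemma switched_offP g g' be : be \in switched_off g g' ->
  [/\ be \in Gamma1 v, Ind be g & ~~ Ind be g'].
Proof. by rewrite inE => /andP [-> /andP [-> ->]]. Qed.

Lemma switched_off_removed g g' be : be \in switched_off g g' ->
  exists2 q, q \in be & q \in removed g g'.
Proof.
case/switched_offP => Gbe Ig; rewrite /Ind negb_forall_in => /exists_inP [q qbe Nq].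
by exists q => //; rewrite inE Nq (Gamma1_lt Gbe qbe) (IndP Ig qbe).
Qed.

Definition witness (d : hpair N) g g' be := odflt d [pick q in be :&: removed g g'].

Lemma witnessP d g g' be : be \in switched_off g g' ->
  witness d g g' be \in be /\ witness d g g' be \in removed g g'.
Proof.
move=> Sbe; rewrite /witness; case: pickP => [q|]; first by rewrite inE => /andP [].
by have [q qbe qR] := switched_off_removed Sbe => /(_ q); rewrite inE qbe qR.
Qed.

Lemma witness_inj d g g' : matching g -> {in switched_off g g' &, injective (witness d g g')}.
Proof.
move=> Mg be be' Sbe Sbe' E; have [wbe _] := witnessP d Sbe; have [wbe' _] := witnessP d Sbe'.
case/switched_offP: Sbe => Gbe Ibe _; case/switched_offP: Sbe' => Gbe' Ibe' _.
by apply: (Gamma1_Ind_inj Mg Gbe Gbe' Ibe Ibe' wbe); rewrite E.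
Qed.

Lemma card_switched_off g g' : matching g -> #|switched_off g g'| <= #|removed g g'|.
Proof.
move=> Mg; have [->|[be Sbe]] := set_0Vmem (switched_off g g'); first by rewrite cards0.
have [d _ _] := switched_off_removed Sbe.
rewrite -(card_in_imset (witness_inj (d := d) Mg)); apply: subset_leq_card.
by apply/subsetP => _ /imsetP [be' Sbe' ->]; exact: (witnessP d Sbe').2.
Qed.

Lemma card_switched_off_lt g g' q1 q2 : matching g ->
  q1 \in removed g g' -> q2 \in removed g g' ->
  (forall be, be \in switched_off g g' -> q1 \in be -> q2 \in be /\ q2 != q1) ->
  #|switched_off g g'| < #|removed g g'|.
Proof.
move=> Mg Rq1 Rq2 q12.
have [q Rq Nq] : exists2 q, q \in removed g g' & q \notin witness q1 g g' @: switched_off g g'.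
  have [|/negbNE/imsetP [be Sbe Eq1]] :=
    boolP (q1 \notin witness q1 g g' @: switched_off g g'); first by exists q1.
  exists q2 => //; apply/imsetP => -[be' Sbe' Eq2].
  have [wbe _] := witnessP q1 Sbe; have [wbe' _] := witnessP q1 Sbe'.
  case/switched_offP: (Sbe) => Gbe Ibe _; case/switched_offP: (Sbe') => Gbe' Ibe' _.
  have [q2be Nq12] : q2 \in be /\ q2 != q1 by apply: q12 => //; rewrite Eq1.
  have Ebe : be' = be by apply: (Gamma1_Ind_inj Mg Gbe' Gbe Ibe' Ibe wbe'); rewrite -Eq2.
  by move: Nq12; rewrite Eq1 Eq2 Ebe eqxx.
rewrite -(card_in_imset (witness_inj (d := q1) Mg)) (cardsD1 q (removed g g')) Rq ltnS.
apply: subset_leq_card; apply/subsetP => _ /imsetP [be Sbe ->].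
rewrite in_setD1 (witnessP q1 Sbe).2 andbT; apply: contraNneq Nq => <-.
exact: imset_f.
Qed.

Lemma card_switched_switch1 g a b c : matching g -> g a = b -> c != a ->
  #|switched_off g (switch1 g (a, b) c)| + #|switched_off (switch1 g (a, b) c) g| <= 4.
Proof.
move=> Mg Eb Nca; have [R R'] := switch1_removed Mg Eb Nca.
have Mg' := switch1_matching Mg Eb Nca.
by apply: (leq_add (n1 := 2) (n2 := 2)); apply: leq_trans (card_switched_off _ _) _.
Qed.

Lemma card_switched_switch2 g al a1 b1 a2 b2 c1 c2 u w :
  matching g -> al \in Gamma1 v -> Ind al g -> (a1, b1) \in al -> (a2, b2) \in al ->
  uniq [:: a1; b1; a2; b2] -> c1 \notin [:: a1; a2; b2] -> c2 != a2 ->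
  deg2 u -> v w = v u -> w != u -> u \in [:: a1; b1; a2; b2] -> w \in [:: a1; b1; a2; b2] ->
  let g2 := switch1 (switch1 g (a1, b1) c1) (a2, b2) c2 in
  #|switched_off g g2| + #|switched_off g2 g| <= 6.
Proof.
move=> Mg Gal Ial p1al p2al U Nc1 Nc2a d2u vw Nwu uE wE /=.
have E1 : g a1 = b1 by apply/eqP; exact: (IndP Ial p1al).
have E2 : g a2 = b2 by apply/eqP; exact: (IndP Ial p2al).
move: Nc1; rewrite !inE !negb_or => /and3P [Nc1a1 Nc1a2 Nc1b2].
have [->|Nc1b1] := eqVneq c1 b1.
  by rewrite switch1_id; apply: leq_trans (card_switched_switch1 Mg E2 Nc2a) _.
have [->|Nc2b2] := eqVneq c2 b2.
  by rewrite switch1_id; apply: leq_trans (card_switched_switch1 Mg E1 Nc1a1) _.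
have Nc1 : c1 \notin [:: a1; b1; a2; b2] by rewrite !inE !negb_or Nc1a1 Nc1b1 Nc1a2 Nc1b2.
have [G2 moved] := switch2_moves Mg E1 E2 U Nc1 Nc2a Nc2b2.
have Mg1 := switch1_matching Mg E1 Nc1a1.
have [R1 R1'] := switch1_removed Mg E1 Nc1a1.
have [R2 R2'] := switch1_removed Mg1 G2 Nc2a.
have Mg2 := switch1_matching Mg1 G2 Nc2a.
set g1 := switch1 g (a1, b1) c1 in G2 moved Mg1 R1 R1' R2 R2' Mg2 *.
set g2 := switch1 g1 (a2, b2) c2 in moved R2 R2' Mg2 *.
(* Both pairs of al are removed, and al is the only switched-off beta through either. *)
have lt_off : #|switched_off g g2| < 4.
  apply: leq_trans (card_switched_off_lt (q1 := (a1, b1)) (q2 := (a2, b2)) Mg _ _ _) _.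
  - rewrite inE /= (Gamma1_lt Gal p1al) /inG /= E1 eqxx /=.
    by have := moved a1; rewrite E1 mem_head => /(_ isT).
  - rewrite inE /= (Gamma1_lt Gal p2al) /inG /= E2 eqxx /=.
    by have := moved a2; rewrite E2 !inE eqxx !orbT => /(_ isT).
  - move=> be Sbe p1be; case/switched_offP: Sbe => Gbe Ibe _.
    rewrite (Gamma1_Ind_inj Mg Gbe Gal Ibe Ial p1be p1al) p2al; split => //.
    by apply: contraTneq U => -[-> _]; rewrite /= !inE eqxx !orbT.
  exact: leq_trans (card_removed_trans g g1 g2) (leq_add R1 R2).
(* Every switched-on beta through the new pair at u also contains the new pair at w. *)
have lt_on : #|switched_off g2 g| < 4.
  have R z : z \in [:: a1; b1; a2; b2] -> mkpair z (g2 z) \in removed g2 g.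
    move=> zE; rewrite inE mkpair_lt; last by rewrite eq_sym; exact: (Mg2 z).2.
    by rewrite !inG_mkpair // eqxx eq_sym moved.
  apply: leq_trans (card_switched_off_lt Mg2 (R u uE) (R w wE) _) _.
    move=> be Sbe ube; case/switched_offP: Sbe => Gbe Ibe _.
    exact: (Gamma1_partner Mg2 Gbe Ibe d2u vw Nwu ube).
  exact: leq_trans (card_removed_trans g2 g1 g) (leq_add R2' R1').
exact: (leq_add (n1 := 3) (n2 := 3)).
Qed.

Lemma card_switched_Gamma11 al g b : al \in Gamma11 v -> matching g -> Ind al g ->
  b \in Bset al -> #|switched_off g (g_alpha g b)| + #|switched_off (g_alpha g b) g| <= 4.
Proof.
move=> /Gamma11P [s [t [_ _ _ alE]]] Mg Ial Bb.
have [c Nc ->] := g_alpha_set1 alE Ial Bb.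
have : inG g (mkpair s t) by apply: (IndP Ial); rewrite alE set11.
by case: (mkpair s t) Nc => x y /= Nc /eqP gx; apply: card_switched_switch1.
Qed.

Lemma card_switched_Gamma12 al g b : al \in Gamma12 v -> matching g -> Ind al g ->
  b \in Bset al -> #|switched_off g (g_alpha g b)| + #|switched_off (g_alpha g b) g| <= 6.
Proof.
move=> Gal12 Mg Ial Bb; have Gal : al \in Gamma1 v by rewrite inE Gal12 orbT.
have [s [t [u [w [U d2u vw alE]]]]] := Gamma12E Gal12.
have Nwu : w != u.
  by move: U; rewrite /= !inE !negb_or => /and4P [_ /andP [_ Nuw] _ _]; rewrite eq_sym.
have key p q : al = [set p; q] -> p.1 < q.1 ->
    perm_eq [:: p.1; p.2; q.1; q.2] [:: s; u; t; w] ->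
    #|switched_off g (g_alpha g b)| + #|switched_off (g_alpha g b) g| <= 6.
  move=> alpq lt_pq Epq; have [c1 [c2 [Nc1 Nc2 ->]]] := g_alpha_set2 alpq lt_pq Ial Bb.
  have [pal qal] : p \in al /\ q \in al by rewrite alpq !inE !eqxx orbT.
  case: p q pal qal alpq lt_pq Epq Nc1 Nc2 => [a1 b1] [a2 b2] /= pal qal _ _ Epq Nc1 Nc2.
  apply: (card_switched_switch2 (u := u) (w := w) Mg Gal Ial pal qal) => //.
  - by rewrite (perm_uniq Epq).
  - by rewrite (perm_mem Epq) !inE eqxx orbT.
  - by rewrite (perm_mem Epq) !inE eqxx !orbT.
have EPQ := perm_cat (perm_mkpair s u) (perm_mkpair t w).
rewrite /= in EPQ.
have [lt|lt|eq] := ltngtP (mkpair s u).1 (mkpair t w).1.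
- exact: key _ _ alE lt EPQ.
- apply: key _ _ _ lt _; first by rewrite alE setUC.
  apply: perm_trans EPQ.
  exact: permEl (perm_catC [:: (mkpair t w).1; (mkpair t w).2] [:: _; _]).
- move: U; rewrite -(perm_uniq EPQ) /= !inE.
  by rewrite (val_inj eq) eqxx !orbT.
Qed.

End Gamma1.

Section Gamma1Card.
Variables (N n : nat) (v : 'I_N -> 'I_n).

Definition deg1_pairs : {set hpair N} :=
  [set st | [&& deg1 v st.1, deg1 v st.2 & v st.1 < v st.2]].

Lemma card_deg1 : #|[set x | deg1 v x]| <= nk v 1.
Proof.
have v_inj : {in [set x | deg1 v x] &, injective v}.
  by move=> x y; rewrite !inE => d1x _ vxy; apply: esym; apply: (deg1_fiber d1x).
rewrite -(card_in_imset v_inj); apply: subset_leq_card.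
by apply/subsetP => _ /imsetP [x + ->]; rewrite !inE.
Qed.

Lemma card_deg2 : #|[set x | deg2 v x]| <= 2 * nk v 2.
Proof.
rewrite -sum1_card (partition_big v (mem [set i | deg v i == 2])) /=;
  last by move=> x; rewrite !inE.
rewrite /nk -sum1_card big_distrr /= leq_sum // => i; rewrite inE => /eqP degi.
rewrite muln1 -degi /deg sum1dep_card; apply: subset_leq_card.
by apply/subsetP => x; rewrite !inE => /andP [].
Qed.

Lemma card_deg1_pairs : 2 * #|deg1_pairs| <= nk v 1 ^ 2.
Proof.
pose swap (st : hpair N) := (st.2, st.1).
have swap_inj : injective swap by move=> [a b] [c d] [-> ->].
have disj : [disjoint deg1_pairs & swap @: deg1_pairs].
  apply/pred0P => -[a b] /=; have [|//] := boolP ((a, b) \in deg1_pairs).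
  rewrite inE => /and3P [_ _ lt_ab]; apply/negbTE/imsetP => -[[c d]].
  by rewrite inE => /and3P [_ _ lt_cd] [Ea Eb]; move: lt_ab; rewrite Ea Eb (leq_gtF (ltnW lt_cd)).
rewrite mul2n -addnn -{2}(card_imset _ swap_inj).
apply: leq_trans (_ : #|deg1_pairs :|: swap @: deg1_pairs| <= _).
  by rewrite (geq_leqif (leq_card_setU _ _)).
apply: leq_trans (_ : #|setX [set x | deg1 v x] [set x | deg1 v x]| <= _).
  apply: subset_leq_card; apply/subsetP => st; rewrite inE => /orP [|/imsetP [st' +] ->];
    by rewrite !inE => /and3P [-> -> _].
by rewrite cardsX expnS expn1 leq_mul // card_deg1.
Qed.

Lemma card_Gamma11 : 2 * #|Gamma11 v| <= nk v 1 ^ 2.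
Proof.
apply: leq_trans card_deg1_pairs; rewrite leq_mul2l /=.
apply: leq_trans (leq_imset_card _ _) _; apply: subset_leq_card.
by apply/subsetP => st; rewrite !inE.
Qed.

Lemma card_Gamma12 : #|Gamma12 v| <= nk v 1 ^ 2 * nk v 2.
Proof.
set U := [set uw : hpair N | [&& uw.1 != uw.2, v uw.1 == v uw.2 & deg2 v uw.1]].
have card_U : #|U| <= 2 * nk v 2.
  have fst_inj : {in U &, injective fst}.
    move=> [u w] [u' w']; rewrite !inE /= => /and3P [Nuw /eqP vuw d2u] /and3P [Nuw' /eqP vuw' _] Eu.
    subst u'; congr (_, _); have Nwu : w != u by rewrite eq_sym.
    by have [Ewu|->] := deg2_fiber d2u (esym vuw) Nwu (esym vuw'); rewrite // Ewu eqxx in Nuw'.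
  apply: leq_trans card_deg2; rewrite -(card_in_imset fst_inj); apply: subset_leq_card.
  by apply/subsetP => _ /imsetP [uw + ->]; rewrite !inE => /and3P [].
apply: (@leq_trans (#|deg1_pairs| * #|U|)).
  apply: leq_trans (leq_imset_card _ _) _; rewrite -cardsX; apply: subset_leq_card.
  by apply/subsetP => q; rewrite !inE -!andbA.
apply: leq_trans (leq_mul (leqnn _) card_U) _.
by rewrite mulnCA mulnA leq_mul2r card_deg1_pairs orbT.
Qed.

End Gamma1Card.

Section Expectation.
Variables (N n : nat) (v : 'I_N -> 'I_n) (R : realFieldType).
Local Open Scope ring_scope.
Implicit Types (al : {set hpair N}).

Lemma sumr_bool (T : finType) (A : {set T}) (P : pred T) :
  \sum_(i in A) ((P i)%:R : R) = #|[set i in A | P i]|%:R.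
Proof.
rewrite -sum1_card natr_sum big_mkcond [RHS]big_mkcond /=.
by apply: eq_bigr => i _; rewrite inE; case: (i \in A); case: (P i).
Qed.

Lemma normr_bool_sub (x y : bool) : `|x%:R - y%:R| = (x != y)%:R :> R.
Proof. by case: x; case: y; rewrite /= ?subrr ?normr0 ?subr0 ?sub0r ?normrN ?normr1. Qed.

Lemma sum_switched_le al g (b : {ffun 'I_#|al| -> 'I_N}) :
  \sum_(be in Gamma1 v) `|(Ind be g)%:R - (Jba be g b)%:R| <=
  (#|switched_off v g (g_alpha g b)| + #|switched_off v (g_alpha g b) g|)%:R :> R.
Proof.
under eq_bigr do rewrite normr_bool_sub.
rewrite sumr_bool ler_nat; apply: leq_trans (leq_card_setU _ _); apply: subset_leq_card.
apply/subsetP => be; rewrite !inE /Jba.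
by case: (be \in Gamma11 v); case: (be \in Gamma12 v); case: (Ind be g); case: (Ind be _).
Qed.

Lemma Eterm_ge0 al : 0 <= Eterm v R al.
Proof.
rewrite /Eterm; apply: mulr_ge0; first by apply: mulr_ge0; rewrite invr_ge0.
apply: sumr_ge0 => g _; apply: sumr_ge0 => b _.
by apply: mulr_ge0; [apply: mulr_ge0 |]; rewrite ?sumr_ge0.
Qed.

Lemma Eterm_le al (K : nat) :
  (forall g b, g \in Mset N -> Ind al g -> b \in Bset al ->
     (#|switched_off v g (g_alpha g b)| + #|switched_off v (g_alpha g b) g| <= K)%N) ->
  Eterm v R al <= (K ^ 2)%:R * #|[set g in Mset N | Ind al g]|%:R / #|Mset N|%:R.
Proof.
move=> leK; rewrite /Eterm -mulrA [X in _ <= X]mulrC ler_wpM2l ?invr_ge0 //.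
have term g b : g \in Mset N -> b \in Bset al ->
    (Ind al g)%:R * (\sum_(be in Gamma1 v) `|(Ind be g)%:R - (Jba be g b)%:R|) *
    (\sum_(be in Gamma1 v) `|(Ind be g)%:R - (Jba be g b)%:R|) <= (Ind al g)%:R * (K ^ 2)%:R :> R.
  move=> Mg Bb; case Ial: (Ind al g); last by rewrite !mul0r.
  move: (leK g b Mg Ial Bb); rewrite -(ler_nat R) => /(le_trans (sum_switched_le g b)) S_le.
  by rewrite !mul1r natrX expr2; apply: ler_pM => //; apply: sumr_ge0 => *.
apply: le_trans (ler_wpM2l _ (ler_sum _ (fun g Mg => ler_sum _ (term g ^~ Mg)))) _.
  by rewrite invr_ge0.
under eq_bigr do rewrite sumr_const.
rewrite sumrMnl -mulr_suml sumr_bool [_ * (K ^ 2)%:R]mulrC -[X in _^-1 * X]mulr_natl.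
case: #|Bset al| => [|k]; first by rewrite invr0 mul0r mulr_ge0.
by rewrite mulKf ?pnatr_eq0.
Qed.

Lemma ratio_le_inv (a k m : nat) : m = (a * k)%N -> (0 < a)%N -> k%:R / m%:R <= a%:R^-1 :> R.
Proof.
move=> -> a0; have [->|k0] := posnP k; first by rewrite mul0r invr_ge0.
by rewrite natrM invfM mulrCA mulfV ?mulr1 // pnatr_eq0 -lt0n.
Qed.

Lemma Eterm_Gamma11 al : (3 < N)%N -> al \in Gamma11 v -> Eterm v R al <= 16 / (N - 1)%:R.
Proof.
move=> N3 G11; case/Gamma11P: (G11) => s [t [_ _ lt_st alE]].
apply: le_trans (Eterm_le (K := 4) _) _.
  by move=> g b; rewrite inE => /is_matchingP Mg Ial Bb; exact: card_switched_Gamma11.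
have Nst : s != t by apply: contraTneq lt_st => ->; rewrite ltnn.
have -> : [set g in Mset N | Ind al g] = [set g in Mset N | g s == t].
  apply/setP => g; rewrite !inE alE Ind_set1.
  by case: (boolP (is_matching g)) => // /is_matchingP Mg; exact: inG_mkpair.
rewrite -mulrA ler_wpM2l // (ratio_le_inv (card_Mset_fiber1 Nst)) //.
by rewrite subn_gt0 (ltn_trans _ N3).
Qed.

Lemma Eterm_Gamma12 al : (3 < N)%N -> al \in Gamma12 v ->
  Eterm v R al <= 36 / ((N - 1) * (N - 3))%:R.
Proof.
move=> N3 G12; have [s [t [u [w [U _ _ alE]]]]] := Gamma12E G12.
apply: le_trans (Eterm_le (K := 6) _) _.
  by move=> g b; rewrite inE => /is_matchingP Mg Ial Bb; exact: card_switched_Gamma12.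
have -> : [set g in Mset N | Ind al g] = [set g in Mset N | (g s == u) && (g t == w)].
  apply/setP => g; rewrite !inE alE Ind_set2.
  by case: (boolP (is_matching g)) => // /is_matchingP Mg; rewrite !inG_mkpair.
rewrite -mulrA ler_wpM2l // (ratio_le_inv (card_Mset_fiber2 U)) //.
by rewrite muln_gt0 !subn_gt0 N3 (ltn_trans _ N3).
Qed.

End Expectation.

Section Arithmetic.
Local Open Scope ring_scope.

Lemma ler_sum_setU (R : numDomainType) (T : finType) (A B : {set T}) (F : T -> R) :
  (forall i, 0 <= F i) -> \sum_(i in A :|: B) F i <= \sum_(i in A) F i + \sum_(i in B) F i.
Proof.
move=> F0; rewrite big_mkcond [X in _ <= X + _]big_mkcond [X in _ <= _ + X]big_mkcond.
rewrite -big_split /=; apply: ler_sum => i _; rewrite in_setU.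
by case: (i \in A); case: (i \in B); rewrite /= ?addr0 ?add0r // lerDl.
Qed.

(* With x := m / b <= c: 16 g1 / a <= 8 m^2 / b = 8 m x
   and 36 g2 / (a b) <= 36 m^3 / b^2 = 36 m x^2. *)
Lemma weighted_cards_le (R : realFieldType) (g1 g2 m a b c : R) :
  0 < b -> b <= a -> 0 <= m -> m / b <= c -> 2 * g1 <= m ^+ 2 -> g2 <= m ^+ 3 ->
  g1 * (16 / a) + g2 * (36 / (a * b)) <= (8 * c + 36 * c ^+ 2) * m.
Proof.
move=> b0 le_ba m0 le_c g1_le g2_le; have a0 : 0 < a := lt_le_trans b0 le_ba.
have ia0 : 0 <= a^-1 by rewrite invr_ge0 ltW.
have ib0 : 0 <= b^-1 by rewrite invr_ge0 ltW.
have le_iab : a^-1 <= b^-1 by rewrite lef_pV2 ?posrE.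
have mb0 : 0 <= m * b^-1 by rewrite mulr_ge0.
rewrite invfM.
have h1 : 2 * g1 * a^-1 <= m ^+ 2 * a^-1 by rewrite ler_wpM2r.
have h2 : m ^+ 2 * a^-1 <= m ^+ 2 * b^-1 by rewrite ler_wpM2l // exprn_ge0.
have h3 : m * (m * b^-1) <= m * c by rewrite ler_wpM2l.
have h4 : g2 * (a^-1 * b^-1) <= m ^+ 3 * (a^-1 * b^-1) by rewrite ler_wpM2r // mulr_ge0.
have h5 : m ^+ 3 * (a^-1 * b^-1) <= m ^+ 3 * (b^-1 * b^-1).
  by rewrite ler_wpM2l ?exprn_ge0 // ler_wpM2r.
have h6 : m * ((m * b^-1) * (m * b^-1)) <= m * (c * c) by rewrite ler_wpM2l // ler_pM.
nra.
Qed.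

End Arithmetic.

Theorem proposition4p9 (R : realFieldType) (N n : nat) (v : 'I_N -> 'I_n)
  (c : R) :
  ~~ odd N -> 3 < N ->
  ((maxn (nk v 1) (nk v 2))%:R / (N - 3)%:R <= c)%R ->
  (\sum_(al in Gamma1 v) Eterm v R al
     <= (8 * c + 36 * c ^+ 2) * (maxn (nk v 1) (nk v 2))%:R)%R.
Proof.
move=> _ N3 le_c; set m := maxn (nk v 1) (nk v 2) in le_c *.
have G11 : 2 * #|Gamma11 v| <= m ^ 2.
  by apply: leq_trans (card_Gamma11 v) _; rewrite leq_exp2r // leq_maxl.
have G12 : #|Gamma12 v| <= m ^ 3.
  apply: leq_trans (card_Gamma12 v) _.
  by rewrite [m ^ 3]expnSr leq_mul ?leq_maxr // leq_exp2r // leq_maxl.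
apply: le_trans (ler_sum_setU _ _ (@Eterm_ge0 N n v R)) _.
have S11 : (\sum_(al in Gamma11 v) Eterm v R al <= #|Gamma11 v|%:R * (16 / (N - 1)%:R))%R.
  apply: le_trans (ler_sum _ (fun al => Eterm_Gamma11 R N3)) _.
  by rewrite sumr_const -[(_ *+ #|_|)%R]mulr_natl.
have S12 : (\sum_(al in Gamma12 v) Eterm v R al <=
            #|Gamma12 v|%:R * (36 / ((N - 1) * (N - 3))%:R))%R.
  apply: le_trans (ler_sum _ (fun al => Eterm_Gamma12 R N3)) _.
  by rewrite sumr_const -[(_ *+ #|_|)%R]mulr_natl.
apply: le_trans (lerD S11 S12) _; rewrite natrM.
apply: weighted_cards_le => //.
- by rewrite ltr0n subn_gt0.
- by rewrite ler_nat leq_sub2l.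
- by rewrite -natrM -natrX ler_nat.
- by rewrite -natrX ler_nat.
Qed.
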